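(* For all positive integers $k,\ell,n$ there exists a graph $G$ with pathwidth at most $k+1$ such that for every graph $H$ and every path $P$, if $G$ is isomorphic to a subgraph of $H\boxtimes P\boxtimes K_\ell$, then $P_n+K_k$ is isomorphic to a subgraph of $H$.
   Context: Graphs are finite and simple. $P_n$ is the path on $n$ vertices and $K_m$ the complete graph on $m$ vertices. The complete join $G+H$ is the disjoint union of $G$ and $H$ together with all edges between $V(G)$ and $V(H)$. The strong product $G\boxtimes H$ has vertex set $V(G)\times V(H)$ with $(v,w)\sim(v',w')$ if ($v=v'$ and $ww'\in E(H)$) or ($w=w'$ and $vv'\in E(G)$) or ($vv'\in E(G)$ and $ww'\in E(H)$). Pathwidth is the usual parameter (minimum over path-decompositions of the maximum bag size minus one). *)

From mathcomp Require Import all_boot.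
Set Implicit Arguments. Unset Strict Implicit. Unset Printing Implicit Defensive.

Record sgraph := SGraph {
  vert :> finType;
  adj : rel vert;
  adj_sym : symmetric adj;
  adj_irr : irreflexive adj }.

Definition subgraph_iso (G H : sgraph) : Prop :=
  exists f : G -> H, injective f /\ forall x y : G, adj x y -> adj (f x) (f y).

Definition path_decomposition (G : sgraph) (B : seq {set G}) : Prop :=
  [/\ forall v : G, exists2 X, X \in B & v \in X,
      forall u v : G, adj u v -> exists2 X, X \in B & (u \in X) && (v \in X)
    & forall (v : G) (i j l : nat), i <= j -> j <= l -> l < size B ->
        v \in nth set0 B i -> v \in nth set0 B l -> v \in nth set0 B j].

Definition pathwidth_le (G : sgraph) (w : nat) : Prop :=
  exists B : seq {set G}, @path_decomposition G B /\ forall X, X \in B -> #|X| <= w.+1.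

Definition path_adj n : rel 'I_n := fun i j => (i.+1 == j :> nat) || (j.+1 == i :> nat).
Lemma path_sym n : symmetric (@path_adj n).
Proof. by move=> i j; rewrite /path_adj orbC. Qed.
Lemma path_irr n : irreflexive (@path_adj n).
Proof. by move=> i; rewrite /path_adj orbb; apply/negP => /eqP/esym/n_Sn. Qed.
Definition Pn (n : nat) : sgraph := SGraph (@path_sym n) (@path_irr n).

Definition complete_adj m : rel 'I_m := fun i j => i != j.
Lemma complete_sym m : symmetric (@complete_adj m).
Proof. by move=> i j; rewrite /complete_adj eq_sym. Qed.
Lemma complete_irr m : irreflexive (@complete_adj m).
Proof. by move=> i; rewrite /complete_adj eqxx. Qed.
Definition Km (m : nat) : sgraph := SGraph (@complete_sym m) (@complete_irr m).

Definition strong_adj (G H : sgraph) : rel (G * H)%type :=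
  fun p q => [|| (p.1 == q.1) && adj p.2 q.2,
                 adj p.1 q.1 && (p.2 == q.2)
               | adj p.1 q.1 && adj p.2 q.2].
Lemma strong_sym G H : symmetric (@strong_adj G H).
Proof.
by move=> p q; rewrite /strong_adj (eq_sym p.1) (eq_sym p.2) (adj_sym p.1) (adj_sym p.2).
Qed.
Lemma strong_irr G H : irreflexive (@strong_adj G H).
Proof. by move=> p; rewrite /strong_adj !adj_irr !andbF andFb. Qed.
Definition strong (G H : sgraph) : sgraph := SGraph (@strong_sym G H) (@strong_irr G H).

Definition join_adj (G H : sgraph) : rel (G + H)%type :=
  fun p q => match p, q with
             | inl x, inl y => adj x y
             | inr x, inr y => adj x y
             | _, _ => true end.
Lemma join_sym G H : symmetric (@join_adj G H).
Proof. by case=> x [] y //=; rewrite adj_sym. Qed.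
Lemma join_irr G H : irreflexive (@join_adj G H).
Proof. by case=> x /=; rewrite adj_irr. Qed.
Definition join (G H : sgraph) : sgraph := SGraph (@join_sym G H) (@join_irr G H).

From mathcomp Require Import all_boot zify.
Set Implicit Arguments. Unset Strict Implicit. Unset Printing Implicit Defensive.

(* The witness is the closure of a complete M-ary tree, M = 3l + 1: the nodes of depth
   d < k are numbered q < M ^ d, the children of q being q M + j, below each of the M ^ k
   positions of depth k hangs a path on N + 1 vertices, and every vertex is adjacent to
   all its ancestors.  Sweeping the hanging paths from left to right gives bags made of
   the k ancestors of a position and one edge of its path.

   Let f embed this graph in H ⊠ P ⊠ K_l.  The root is adjacent to everything, so all
   P-coordinates lie within 1 of the root's, and each vertex of H is the H-coordinate of
   at most 3l vertices.  Descending from the root, the current node x has a child whose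
   subtree avoids the H-fibre of x, and the H-coordinates of that subtree are then
   adjacent to that of x; after k steps this yields a k-clique of H complete to the
   H-image of a hanging path.  That image is a walk with repetitions in which every vertex
   occurs at most 3l times; the occurrences of its first vertex cut it into at most 3l
   pieces, one of which is long, and recursing into that piece extracts a path on n
   vertices once N >= walk_bound (3l) (n - 1). *)

Definition lazy_adj (G : sgraph) : rel G := fun x y => (x == y) || adj x y.

Definition hom (G H : sgraph) (f : G -> H) := forall x y, adj x y -> adj (f x) (f y).

Definition clique (H : sgraph) (A : seq H) := {in A &, forall x y, x != y -> adj x y}.

Lemma lazy_adj_strong (G1 G2 : sgraph) (p q : strong G1 G2) :
  lazy_adj p q -> lazy_adj p.1 q.1 /\ lazy_adj p.2 q.2.
Proof.
case/orP => [/eqP -> | ]; first by rewrite /lazy_adj !eqxx.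
by case/or3P => /andP [a b]; rewrite /lazy_adj a b !orbT.
Qed.

Lemma lazy_adj_Pn n (i j : Pn n) : lazy_adj i j -> i <= j.+1 /\ j <= i.+1.
Proof. by case/orP => [/eqP -> | /orP [] /eqP <-]; lia. Qed.

Lemma adj_lazy_adj (G : sgraph) (x y : G) : adj x y -> lazy_adj x y.
Proof. by move=> xy; apply/orP; right. Qed.

Lemma hom_lazy_adj (G H : sgraph) (f : G -> H) x y :
  hom f -> lazy_adj x y -> lazy_adj (f x) (f y).
Proof. by move=> f_hom /orP [/eqP -> | /f_hom /adj_lazy_adj //]; apply/orP; left. Qed.

Lemma join_subgraph (G1 G2 H : sgraph) (f : G1 -> H) (g : G2 -> H) :
  injective f -> hom f -> injective g -> hom g -> (forall x y, adj (f x) (g y)) ->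
  subgraph_iso (join G1 G2) H.
Proof.
move=> f_inj f_hom g_inj g_hom fg_adj.
exists (fun z => match z with inl x => f x | inr y => g y end); split.
- have fg_neq x y : f x <> g y by move=> e; move: (fg_adj x y); rewrite e adj_irr.
  case=> [x|y] [x'|y'] e; first by rewrite (f_inj _ _ e).
  + by case: (fg_neq _ _ e).
  + by case: (fg_neq _ _ (esym e)).
  + by rewrite (g_inj _ _ e).
- case=> [x|y] [x'|y'] //= xy; [exact: f_hom | rewrite adj_sym // | exact: g_hom].
Qed.

Lemma path_hom (H : sgraph) (s : seq H) :
  sorted (@adj H) s -> @hom (Pn (size s)) H (tnth (in_tuple s)).
Proof.
case: s => [|x0 s] s_adj i j; first by case: i.
have step a : a.+1 < (size s).+1 -> adj (nth x0 (x0 :: s) a) (nth x0 (x0 :: s) a.+1).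
  by move/(sortedP x0 s_adj).
rewrite !(tnth_nth x0) /= => /orP [] /eqP e; [rewrite -e | rewrite -e adj_sym];
  by apply: step; rewrite e; apply: ltn_ord.
Qed.

Lemma clique_hom (H : sgraph) (A : seq H) :
  uniq A -> clique A -> @hom (Km (size A)) H (tnth (in_tuple A)).
Proof.
move=> A_uniq A_clique i j ij; apply: A_clique; rewrite ?mem_tnth //.
have A_inj : injective (tnth (in_tuple A)) by apply/tuple_uniqP.
by apply: contra ij => /eqP /A_inj ->.
Qed.

Lemma join_path_clique_subgraph (H : sgraph) (P A : seq H) :
  uniq P -> sorted (@adj H) P -> uniq A -> clique A -> {in P & A, forall x a, adj x a} ->
  subgraph_iso (join (Pn (size P)) (Km (size A))) H.
Proof.
move=> P_uniq P_adj A_uniq A_clique PA_adj.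
apply: join_subgraph (path_hom P_adj) _ (clique_hom A_uniq A_clique) _.
- exact/tuple_uniqP.
- exact/tuple_uniqP.
- by move=> i j; apply: PA_adj; apply: mem_tnth.
Qed.

Lemma count_le_card (T : finType) (a : pred T) (s : seq T) : uniq s -> count a s <= #|a|.
Proof.
move=> s_uniq; rewrite -size_filter -(card_uniqP (filter_uniq a s_uniq)).
by apply/subset_leq_card/subsetP => x; rewrite mem_filter => /andP [].
Qed.

Fixpoint walk_bound (L n : nat) : nat :=
  if n is n'.+1 then L * (walk_bound L n').+1 else 0.

Lemma long_segment_avoiding (T : eqType) (x : T) s c g :
  count_mem x s < c -> c * g.+1 <= size s ->
  exists s1 s2 s3, [/\ s = s1 ++ s2 ++ s3, last x s1 = x, x \notin s2 & g < size s2].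
Proof.
elim: c s => [//|c IHc] s x_count s_size.
have [xs|xNs] := boolP (x \in s); last by exists [::], s, [::]; rewrite cats0; split=> //; lia.
move: x_count s_size; have /split_find [_ s1 s2 /eqP -> xNs1] : has (pred1 x) s.
  by rewrite has_pred1.
rewrite has_pred1 in xNs1; rewrite cat_rcons => x_count s_size.
have [long_s1|short_s1] := ltnP g (size s1).
  by exists [::], s1, (x :: s2).
have x_count2 : count_mem x s2 < c by move: x_count; rewrite count_cat /= eqxx; lia.
have s2_size : c * g.+1 <= size s2 by move: s_size; rewrite size_cat mulSn /=; lia.
have [t1 [t2 [t3 [-> t1_last xNt2 t2_size]]]] := IHc s2 x_count2 s2_size.
by exists (s1 ++ x :: t1), t2, t3; rewrite -catA last_cat.
Qed.

Section LazyWalks.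
Variables (H : sgraph) (L : nat).

Lemma lazy_walk_path_from n (x : H) s :
  path (@lazy_adj H) x s -> (forall u, count_mem u (x :: s) <= L) -> walk_bound L n <= size s ->
  exists p, [/\ size p = n, uniq (x :: p), path (@adj H) x p & {subset p <= s}].
Proof.
elim: n x s => [|n IHn] x s walk_s s_count s_size; first by exists [::].
have x_count : count_mem x s < L by have := s_count x; rewrite /= eqxx.
have [s1 [[|y t] [s3 [s_eq s1_last xNyt yt_size]]]] :=
  long_segment_avoiding (g := walk_bound L n) x_count s_size; first by [].
move: walk_s; rewrite s_eq cat_path s1_last /= cat_path => /and4P [_ xy walk_t _].
have t_count u : count_mem u (y :: t) <= L.
  by apply: leq_trans (s_count u); rewrite s_eq /= !count_cat /= count_cat; lia.
have [p [p_size p_uniq p_path p_sub]] := IHn y t walk_t t_count yt_size.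
have yp_sub : {subset y :: p <= y :: t}.
  by move=> z; rewrite !inE => /orP [-> // | /p_sub ->]; rewrite orbT.
have xNyp : x \notin y :: p by apply: contra xNyt => /yp_sub.
exists (y :: p); split.
- by rewrite /= p_size.
- exact/andP.
- rewrite /= p_path andbT; case/orP: xy => [/eqP xy | //].
  by move: xNyt; rewrite xy mem_head.
- by move=> z /yp_sub; rewrite mem_cat -cat_cons mem_cat => ->; rewrite orbT.
Qed.

Lemma lazy_walk_path n (s : seq H) :
  sorted (@lazy_adj H) s -> (forall u, count_mem u s <= L) -> walk_bound L n < size s ->
  exists p, [/\ size p = n.+1, uniq p, sorted (@adj H) p & {subset p <= s}].
Proof.
case: s => [//|x s] walk_s s_count s_size.
have [p [p_size p_uniq p_path p_sub]] := lazy_walk_path_from walk_s s_count s_size.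
exists (x :: p); split=> //=; first by rewrite p_size.
by move=> z; rewrite !inE => /orP [-> // | /p_sub ->]; rewrite orbT.
Qed.

End LazyWalks.

Section TreeOfPaths.
Variables (k M N : nat).

(* [inl] vertices are the tree nodes (depth, column); [inr (t, i)] is vertex i of the path
   hanging at position t, at depth k and column t. *)
Definition node := {x : 'I_k * 'I_(M ^ k) | x.2 < M ^ x.1}.
Definition tp_vertex := (node + 'I_(M ^ k) * 'I_N.+1)%type.

Definition depth (v : tp_vertex) : nat := if v is inl a then (val a).1 else k.
Definition column (v : tp_vertex) : nat :=
  match v with inl a => (val a).2 | inr p => p.1 end.

Definition in_subtree d q (v : tp_vertex) :=
  (d <= depth v) && (column v %/ M ^ (depth v - d) == q).
Definition strict_ancestor (u v : tp_vertex) :=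
  (depth u < depth v) && in_subtree (depth u) (column u) v.
Definition rung (u v : tp_vertex) :=
  match u, v with inr (t, i), inr (t', i') => (t == t') && path_adj i i' | _, _ => false end.
Definition tp_adj u v := [|| strict_ancestor u v, strict_ancestor v u | rung u v].

Lemma tp_adj_sym : symmetric tp_adj.
Proof.
move=> u v; rewrite /tp_adj orbCA; congr [|| _, _ | _].
by case: u v => [a|[t i]] [b|[t' i']] //=; rewrite eq_sym path_sym.
Qed.

Lemma tp_adj_irr : irreflexive tp_adj.
Proof. by case=> [a|[t i]]; rewrite /tp_adj /strict_ancestor ltnn //= path_irr andbF. Qed.

Definition tree_of_paths : sgraph := SGraph tp_adj_sym tp_adj_irr.

Lemma depth_le v : depth v <= k.
Proof. by case: v => [a|p] //=; apply: ltnW. Qed.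

Lemma column_lt v : column v < M ^ depth v.
Proof. by case: v => [a|p]; [apply: (valP a) | apply: ltn_ord]. Qed.

Lemma in_subtree_parent d q j v :
  j < M -> in_subtree d.+1 (q * M + j) v -> in_subtree d q v.
Proof.
move=> j_lt /andP [d_le /eqP v_col]; rewrite /in_subtree ltnW //=.
have -> : depth v - d = (depth v - d.+1).+1 by lia.
by rewrite expnSr divnMA v_col divnMDl ?divn_small ?addn0 //; apply: leq_ltn_trans j_lt.
Qed.

Lemma in_subtree_child d q j v :
  j < M -> in_subtree d.+1 (q * M + j) v -> column v %/ M ^ (depth v - d.+1) %% M = j.
Proof. by move=> j_lt /andP [_ /eqP ->]; rewrite modnMDl modn_small. Qed.

Definition leaf_path (t : 'I_(M ^ k)) (i : nat) : tree_of_paths := inr (t, inord i).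

Lemma in_subtree_leaf_path (t : 'I_(M ^ k)) i : in_subtree k t (leaf_path t i).
Proof. by rewrite /in_subtree /= leqnn subnn expn0 divn1 eqxx. Qed.

Lemma leaf_path_adj t i : i < N -> adj (leaf_path t i) (leaf_path t i.+1).
Proof.
by move=> i_lt; rewrite /= /tp_adj /strict_ancestor ltnn /= eqxx /path_adj !inordK ?eqxx //; lia.
Qed.

Lemma leaf_path_inj t i i' : i <= N -> i' <= N -> leaf_path t i = leaf_path t i' -> i = i'.
Proof. by move=> i_le i'_le [] /(congr1 val); rewrite /= !inordK. Qed.

Section PositiveArity.
Hypothesis M_gt0 : 0 < M.

Section Node.
Variables (d q : nat) (d_lt : d < k) (q_lt : q < M ^ d).

Definition node_at : tree_of_paths :=
  inl (exist _ (Ordinal d_lt, Ordinal (leq_trans q_lt (leq_pexp2l M_gt0 (ltnW d_lt)))) q_lt).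

Lemma in_subtree_node_at : in_subtree d q node_at.
Proof. by rewrite /in_subtree /node_at /= leqnn subnn expn0 divn1 eqxx. Qed.

Lemma node_at_adj v : in_subtree d q v -> d < depth v -> adj node_at v.
Proof. by move=> v_sub d_lt_v; rewrite /= /tp_adj /strict_ancestor /= d_lt_v v_sub. Qed.

End Node.

Lemma root_lazy_adj (k_gt0 : 0 < k) (root_lt : 0 < M ^ 0) v :
  lazy_adj (node_at k_gt0 root_lt) v.
Proof.
have [depth0|depth_gt0] := posnP (depth v); last first.
  apply/orP; right; apply: node_at_adj depth_gt0.
  by rewrite /in_subtree subn0 divn_small ?column_lt.
apply/orP; left; apply/eqP.
case: v depth0 => [[[d q] q_lt] /= d0|p /= k0]; last by exfalso; lia.
have q0 : q = 0 :> nat by move: q_lt; rewrite /= d0 expn0; lia.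
by congr inl; apply: val_inj; congr pair; apply: val_inj; rewrite /= ?d0 ?q0.
Qed.

End PositiveArity.

Section Bags.
Hypotheses (M_gt0 : 0 < M) (N_gt0 : 0 < N).

Definition in_bag j (v : tp_vertex) :=
  (column v == j %/ N %/ M ^ (k - depth v))
  && (if v is inr p then j %% N <= p.2 <= (j %% N).+1 else true).
Definition bag j : {set tree_of_paths} := [set v | in_bag j v].
Definition bags := mkseq bag (M ^ k * N).

Lemma divmod_mulDl t r : r < N -> (t * N + r) %/ N = t /\ (t * N + r) %% N = r.
Proof. by move=> r_lt; rewrite divnMDl // modnMDl divn_small // modn_small // addn0. Qed.

Lemma bag_cover v : exists2 j, j < M ^ k * N & v \in bag j.
Proof.
case: v => [[[d q] /= q_lt] | [t i]]; rewrite /bag.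
  exists (q * M ^ (k - d) * N); last by rewrite inE /in_bag /= !mulnK ?expn_gt0 ?M_gt0 ?eqxx.
  move: (d : nat) (q : nat) q_lt (ltn_ord d) => {}d {}q q_lt /ltnW d_le.
  have -> : M ^ k = M ^ d * M ^ (k - d) by rewrite -expnD subnKC.
  by rewrite ltn_pmul2r // ltn_pmul2r // expn_gt0 M_gt0.
have i_pred_lt : i.-1 < N by have := ltn_ord i; lia.
have [jq jr] := divmod_mulDl t i_pred_lt.
exists (t * N + i.-1); first by have := ltn_ord t; nia.
by rewrite inE /in_bag /= jq jr subnn expn0 divn1 eqxx /=; lia.
Qed.

Lemma ancestor_in_bag u v j : strict_ancestor u v -> v \in bag j -> u \in bag j.
Proof.
case/andP=> u_above /andP [_ /eqP v_col]; rewrite !inE => /andP [/eqP v_bag _].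
have u_le := depth_le v.
case: u u_above v_col => [a|p] /=; last by lia.
rewrite /in_bag /= andbT => u_above <-; rewrite v_bag -!divnMA -expnD.
by rewrite addnBA ?subnK // ltnW.
Qed.

Lemma rung_in_bag t (i i' : 'I_N.+1) : i.+1 = i' :> nat ->
  exists2 j, j < M ^ k * N & (inr (t, i) \in bag j) && (inr (t, i') \in bag j).
Proof.
move=> i_succ; have i_lt : i < N by have := ltn_ord i'; lia.
have [jq jr] := divmod_mulDl t i_lt.
exists (t * N + i); first by have := ltn_ord t; nia.
by rewrite !inE /in_bag /= jq jr subnn expn0 divn1 eqxx /=; lia.
Qed.

Lemma edge_in_bag u v : adj u v -> exists2 j, j < M ^ k * N & (u \in bag j) && (v \in bag j).
Proof.
case/or3P => [uv | vu | ].
- have [j j_lt v_bag] := bag_cover v.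
  by exists j; rewrite // v_bag (ancestor_in_bag uv v_bag).
- have [j j_lt u_bag] := bag_cover u.
  by exists j; rewrite // u_bag (ancestor_in_bag vu u_bag).
case: u v => [a|[t i]] [b|[t' i']] //= /andP [/eqP <-] /orP [] /eqP i_succ.
  exact: rung_in_bag.
by have [j j_lt] := rung_in_bag t i_succ; exists j; rewrite // andbC.
Qed.

Lemma bag_interval v i j l :
  i <= j -> j <= l -> v \in bag i -> v \in bag l -> v \in bag j.
Proof.
rewrite !inE /in_bag => ij jl /andP [/eqP ci bi] /andP [/eqP cl bl].
have cj : column v = j %/ N %/ M ^ (k - depth v).
  by apply/eqP; rewrite eqn_leq {1}ci cl !leq_div2r // leq_div2r.
rewrite cj eqxx /=; case: v ci cl bi bl {cj} => [//|[t x]] /=.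
rewrite subnn expn0 !divn1 => ci cl.
have cj : j %/ N = t by apply/eqP; rewrite eqn_leq {1}cl ci !leq_div2r.
have := divn_eq i N; have := divn_eq j N; have := divn_eq l N.
rewrite -ci -cl cj; move: (t * N) => tN; lia.
Qed.

Lemma card_bag j : #|bag j| <= k.+2.
Proof.
pose h v := if v is inr p then k + (p.2 - j %% N) else depth v.
have h_lt v : v \in bag j -> h v < k.+2.
  by rewrite inE => /andP [_]; case: v => [[[d q] _]|p] /=; [have := ltn_ord d | ]; lia.
rewrite -[k.+2]card_ord; apply: (@leq_card_in _ _ (fun v => inord (h v))).
move=> u v u_bag v_bag /(congr1 val); rewrite /= !inordK ?h_lt //.
move: u_bag v_bag; rewrite !inE /in_bag /h.
case: u => [[[d q] q_lt] | [t x]]; case: v => [[[d' q'] q_lt'] | [t' x']] /=.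
- move=> /andP [/eqP qj _] /andP [/eqP q'j _] /val_inj dd; subst d'.
  by congr inl; apply: val_inj; congr pair; apply: val_inj; rewrite /= qj q'j.
- by have := ltn_ord d; lia.
- by have := ltn_ord d'; lia.
rewrite subnn expn0 !divn1 => /andP [/eqP tj xj] /andP [/eqP t'j x'j] xx.
have -> : t = t' by apply: val_inj; rewrite /= tj t'j.
by congr (inr (_, _)); apply: ord_inj; lia.
Qed.

Lemma bag_in_bags j : j < M ^ k * N -> bag j \in bags.
Proof. by move=> j_lt; apply: map_f; rewrite mem_iota. Qed.

Lemma pathwidth_tree_of_paths : pathwidth_le tree_of_paths k.+1.
Proof.
exists bags; split; last by move=> X /mapP [j _ ->]; apply: card_bag.
split.
- move=> v; have [j j_lt v_bag] := bag_cover v.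
  by exists (bag j); first exact: bag_in_bags.
- move=> u v /edge_in_bag [j j_lt uv_bag].
  by exists (bag j); first exact: bag_in_bags.
- move=> v i j l ij jl; rewrite size_mkseq => l_lt.
  by rewrite !nth_mkseq; try lia; apply: bag_interval.
Qed.

End Bags.

End TreeOfPaths.

Section Embedding.
Variables (k l N : nat) (H : sgraph) (m : nat).
Hypothesis k_gt0 : 0 < k.

Let M := (3 * l).+1.
Let M_gt0 : 0 < M := ltn0Sn _.
Let TP := tree_of_paths k M N.

Variable f : TP -> strong (strong H (Pn m)) (Km l).
Hypotheses (f_inj : injective f) (f_hom : hom f).

Let projH v : H := (f v).1.1.
Let projP v : nat := (f v).1.2.

Lemma projH_lazy_adj u v : lazy_adj u v -> lazy_adj (projH u) (projH v).
Proof. by move=> /(hom_lazy_adj f_hom) /lazy_adj_strong [/lazy_adj_strong []]. Qed.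

Lemma projP_near u v : lazy_adj u v -> projP u <= (projP v).+1 /\ projP v <= (projP u).+1.
Proof.
by move=> /(hom_lazy_adj f_hom) /lazy_adj_strong [/lazy_adj_strong [_ /lazy_adj_Pn]].
Qed.

Let root_lt : 0 < M ^ 0 := erefl.
Let root : TP := node_at N M_gt0 k_gt0 root_lt.

Lemma card_fiber u : #|[set v | projH v == u]| <= 3 * l.
Proof.
pose g v : 'I_3 * 'I_l := (inord ((projP v).+1 - projP root), (f v).2).
have <- : #|{: 'I_3 * 'I_l}| = 3 * l by rewrite card_prod !card_ord.
apply: (@leq_card_in _ _ g) => v w; rewrite !inE => /eqP v_u /eqP w_u [] p_eq K_eq.
have near_root x : projP root <= (projP x).+1 /\ projP x <= (projP root).+1.
  exact: projP_near (root_lazy_adj M_gt0 k_gt0 root_lt x).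
have [[rv vr] [rw wr]] := (near_root v, near_root w).
have {}p_eq : projP v = projP w by move/(congr1 val): p_eq; rewrite /= !inordK; lia.
apply: f_inj; move: v_u w_u K_eq p_eq; rewrite /projH /projP.
by case: (f v) => [[a b] c]; case: (f w) => [[a' b'] c'] /= -> -> -> /ord_inj ->.
Qed.

Lemma child_avoiding_fiber d q u :
  exists2 j, j < M & forall v, in_subtree d.+1 (q * M + j) v -> projH v != u.
Proof.
pose child (v : TP) : 'I_M := inord (column v %/ M ^ (depth v - d.+1) %% M).
have : ~~ ([set: 'I_M] \subset child @: [set v | projH v == u]).
  apply/negP => /subset_leq_card; rewrite cardsT card_ord /M.
  move/leq_trans/(_ (leq_imset_card _ _))/leq_trans/(_ (card_fiber u)).
  by rewrite ltnn.
case/subsetPn => j _ j_miss; exists j => // v v_sub; apply: contra j_miss => /eqP v_u.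
apply/imsetP; exists v; first by rewrite inE v_u.
by apply: ord_inj; rewrite inordK ?ltn_pmod // (in_subtree_child (ltn_ord j) v_sub).
Qed.

Lemma clique_complete_to_subtree d : d <= k -> exists q (A : seq H),
  [/\ q < M ^ d, size A = d, uniq A, clique A
    & forall v, in_subtree d q v -> {in A, forall a, adj a (projH v)}].
Proof.
elim: d => [_|d IHd d_lt]; first by exists 0, [::].
have [q [A [q_lt A_size A_uniq A_clique A_adj]]] := IHd (ltnW d_lt).
pose x := node_at N M_gt0 d_lt q_lt.
have x_sub := in_subtree_node_at N M_gt0 d_lt q_lt.
have [j j_lt j_avoid] := child_avoiding_fiber d q (projH x).
exists (q * M + j), (projH x :: A); split.
- by rewrite expnSr; nia.
- by rewrite /= A_size.
- rewrite /= A_uniq andbT; apply/negP => xA.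
  by have := A_adj _ x_sub _ xA; rewrite adj_irr.
- move=> a b; rewrite !inE => /orP [/eqP -> | aA] /orP [/eqP -> | bA] ab;
    rewrite ?eqxx // in ab.
  + by rewrite adj_sym; apply: A_adj x_sub _ bA.
  + exact: A_adj x_sub _ aA.
  + exact: A_clique.
move=> v v_sub; have v_sub_x := in_subtree_parent j_lt v_sub.
move=> a; rewrite inE => /orP [/eqP -> | aA]; last exact: A_adj v_sub_x _ aA.
have /adj_lazy_adj/projH_lazy_adj : adj x v.
  by apply: (node_at_adj M_gt0 d_lt q_lt v_sub_x); case/andP: v_sub.
by case/orP => // /eqP x_v; move: (j_avoid v v_sub); rewrite x_v eqxx.
Qed.

Lemma join_subgraph_of_embedding n :
  walk_bound (3 * l) n <= N -> subgraph_iso (join (Pn n.+1) (Km k)) H.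
Proof.
move=> N_ge.
have [q [A [q_lt A_size A_uniq A_clique A_adj]]] := clique_complete_to_subtree (leqnn k).
pose t : 'I_(M ^ k) := Ordinal q_lt.
pose vs := map (leaf_path N t) (iota 0 N.+1).
have vs_uniq : uniq vs.
  rewrite map_inj_in_uniq ?iota_uniq // => i i'; rewrite !mem_iota /=.
  by move=> i_lt i'_lt; apply: leaf_path_inj; rewrite -ltnS.
have vs_adj : sorted (@adj TP) vs.
  rewrite sorted_map; apply/(sortedP 0) => i; rewrite size_iota => i_lt.
  by rewrite !nth_iota ?add0n //; [apply: leaf_path_adj | apply: ltnW]; lia.
have walk_lazy : sorted (@lazy_adj H) (map projH vs).
  rewrite sorted_map; apply: sub_sorted vs_adj => u v /adj_lazy_adj.
  exact: projH_lazy_adj.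
have walk_count u : count_mem u (map projH vs) <= 3 * l.
  rewrite count_map; apply: leq_trans (card_fiber u).
  apply: leq_trans (count_le_card _ vs_uniq) _.
  by apply/subset_leq_card/subsetP => v; rewrite !inE.
have walk_size : walk_bound (3 * l) n < size (map projH vs).
  by rewrite !size_map size_iota.
have [P [P_size P_uniq P_adj P_sub]] := lazy_walk_path walk_lazy walk_count walk_size.
rewrite -P_size -A_size; apply: join_path_clique_subgraph => // y a.
case/P_sub/mapP => v /mapP [i _ ->] ->{y} aA.
by rewrite adj_sym; apply: A_adj aA; apply: in_subtree_leaf_path.
Qed.

End Embedding.

Theorem proposition10 (k l n : nat) (hk : 0 < k) (hl : 0 < l) (hn : 0 < n) :
  exists G : sgraph,
    pathwidth_le G k.+1 /\
    forall (H : sgraph) (m : nat),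
      subgraph_iso G (strong (strong H (Pn m)) (Km l)) ->
      subgraph_iso (join (Pn n) (Km k)) H.
Proof.
case: n hn => [//|n] _.
exists (tree_of_paths k (3 * l).+1 (walk_bound (3 * l) n).+1); split.
  exact: pathwidth_tree_of_paths.
move=> H m [f [f_inj f_hom]].
exact: (join_subgraph_of_embedding hk f_inj f_hom (leqnSn _)).
Qed.
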